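(* Let $r,c\ge 1$ be integers, $n=r+c$, $N=2^n$, and let $X=(X_1,X_2)$ with $X_1\subset\{0,1\}^n$ the strings ending in $0^c$ and $X_2\subset\{0,1\}^n$ the strings beginning with $0^r$. Let $\varphi\sim\mathcal D_X$. Any quantum algorithm that makes $T$ queries to $\varphi$ and $\varphi^{-1}$ and outputs, with probability $\epsilon>0$, a pair $(x,y)\in X_1\times X_2$ with $\varphi(x)=y$, satisfies $$\epsilon\le\frac{80(T+1)^2}{2^{\min(r,c)}}.$$
   Context: Permutations of $\{0,1\}^n$ are identified with $S_N$. For $\pi\in S_N$, $X_\pi=\{(i,j): i\in X_1,\ j\in X_2,\ \pi(i)=j\}$ is its set of $X$-pairs. The distribution $\mathcal{D}_X$ on $S_N$ is $\Pr_{\Phi\sim\mathcal D_X}[\Phi=\varphi]=|X_\varphi|/\sum_{\sigma\in S_N}|X_\sigma|$. Queries are to the unitaries $O_\varphi:|a\rangle|b\rangle\mapsto|a\rangle|b\oplus\varphi(a)\rangle$ and $O_{\varphi^{-1}}:|a\rangle|b\rangle\mapsto|a\rangle|b\oplus\varphi^{-1}(a)\rangle$; the success probability is over $\varphi$ and the algorithm's randomness and measurements. *)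

From mathcomp Require Import all_boot all_order all_algebra fingroup perm algC.
Unset Printing Implicit Defensive.
Import Order.TTheory GRing.Theory Num.Theory.
Local Open Scope ring_scope.

(* n-bit strings; bit i is the i-th symbol of the string (index 0 = first). *)
Definition bits (n : nat) := {ffun 'I_n -> bool}.
Definition bzero (n : nat) : bits n := [ffun => false].
Definition bxor (n : nat) (x y : bits n) : bits n := [ffun i => x i (+) y i].

Definition X1 (r c : nat) : {set bits (r + c)} :=
  [set x : bits (r + c) | [forall i : 'I_(r + c), (r <= i)%N ==> ~~ x i]].
Definition X2 (r c : nat) : {set bits (r + c)} :=
  [set x : bits (r + c) | [forall i : 'I_(r + c), (i < r)%N ==> ~~ x i]].

Definition Xpairs (r c : nat) (p : {perm bits (r + c)})
  : {set bits (r + c) * bits (r + c)} :=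
  [set ij | [&& ij.1 \in X1 r c, ij.2 \in X2 r c & p ij.1 == ij.2]].

Definition DX (r c : nat) (p : {perm bits (r + c)}) : algC :=
  (#|Xpairs r c p|)%:R / (\sum_(s : {perm bits (r + c)}) #|Xpairs r c s|)%:R.

(* Register: query input |a>, answer |b>, workspace |w> (W+1 basis states). *)
Definition reg (n W : nat) := (bits n * bits n * 'I_W.+1)%type.
Definition state (n W : nat) := reg n W -> algC.
Definition op (n W : nat) := reg n W -> reg n W -> algC.

Definition applyop (n W : nat) (U : op n W) (psi : state n W) : state n W :=
  fun i => \sum_(j : reg n W) U i j * psi j.

Definition unitary (n W : nat) (U : op n W) : Prop :=
  forall i j : reg n W, \sum_(k : reg n W) (U k i)^* * U k j = (i == j)%:R.

(* O_f : |a>|b>|w> -> |a>|b xor f(a)>|w> *)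
Definition oracle (n W : nat) (f : {perm bits n}) : op n W :=
  fun i j => ((i.1.1 == j.1.1) && (i.1.2 == bxor n j.1.2 (f j.1.1))
              && (i.2 == j.2))%:R.

Definition init (n W : nat) : state n W :=
  fun i => (i == (bzero n, bzero n, ord0))%:R.

(* U_0, then for t = 1..T : query number t (to f if s (t-1) = false,
   to f^-1 if s (t-1) = true), followed by U_t. *)
Fixpoint run (n W : nat) (U : nat -> op n W) (s : nat -> bool)
    (f : {perm bits n}) (t : nat) : state n W :=
  match t with
  | 0 => applyop n W (U 0%N) (init n W)
  | t'.+1 => applyop n W (U t)
      (applyop n W (oracle n W (if s t' then (f^-1)%g else f)) (run n W U s f t'))
  end.

(* Probability of outputting (x,y) in X1 x X2 with f x = y, after measuring the
   final state in the computational basis and post-processing with out. *)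
Definition success (r c W T : nat) (U : nat -> op (r + c) W) (s : nat -> bool)
    (out : reg (r + c) W -> bits (r + c) * bits (r + c))
    (f : {perm bits (r + c)}) : algC :=
  \sum_(i : reg (r + c) W | [&& (out i).1 \in X1 r c, (out i).2 \in X2 r c
                              & f (out i).1 == (out i).2])
     `|run (r + c) W U s f T i| ^+ 2.

Definition eps (r c W T : nat) (U : nat -> op (r + c) W) (s : nat -> bool)
    (out : reg (r + c) W -> bits (r + c) * bits (r + c)) : algC :=
  \sum_(f : {perm bits (r + c)}) DX r c f * success r c W T U s out f.

From mathcomp Require Import all_boot all_order all_algebra fingroup perm algC.
From mathcomp Require Import ring zify.
Import Order.TTheory GRing.Theory Num.Theory.
Local Open Scope ring_scope.
Set Implicit Arguments.
Unset Strict Implicit.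

(* Sampling phi ~ D_X amounts to weighting a uniform permutation by |X_phi|.
   For fixed x, write phi = (x z) * g with g and z uniform, so that phi x = g z.
   The oracles phi and g differ only where a query reads x or z, so by the
   hybrid argument the probability of outputting (x, g z) under phi is at most
   twice that under g plus 8T times the query weight on those two points.
   Summed over x in X1 and g z in X2, the first term is at most 1 (these are
   distinct outcomes of a single run of g) and the second at most
   8T^2 (|X1| + |X2|); as |X_phi| <= |X_g| + 2 and |X1| |X2| = 2^n, this gives
   eps <= 3 (2 + 8T^2 (2^r + 2^c)) / 2^(r+c). *)

Lemma bxorK n (b c : bits n) : bxor n (bxor n b c) c = b.
Proof. by apply/ffunP => i; rewrite !ffunE addbK. Qed.

(* |p + q|^2 <= (1 + 1/t) |p|^2 + (1 + t) |q|^2, cleared of denominators. *)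
Lemma sqr_normD_le (t : nat) (p q : algC) :
  t%:R * `|p + q| ^+ 2 <= t.+1%:R * `|p| ^+ 2 + (t * t.+1)%N%:R * `|q| ^+ 2.
Proof.
have E : t%:R * `|p + q| ^+ 2 + `|p - t%:R * q| ^+ 2 =
    t.+1%:R * `|p| ^+ 2 + (t * t.+1)%N%:R * `|q| ^+ 2.
  by rewrite !normCK !rmorphD !rmorphN !rmorphM /= conjC_nat; ring.
by rewrite -E lerDl exprn_ge0.
Qed.

Lemma sqr_normD_le2 (p q : algC) : `|p + q| ^+ 2 <= 2%:R * `|p| ^+ 2 + 2%:R * `|q| ^+ 2.
Proof. by have := sqr_normD_le 1 p q; rewrite mul1r mul1n. Qed.

Lemma ler_psum_sub (I : finType) (P : pred I) (F : I -> algC) :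
  (forall i, 0 <= F i) -> \sum_(i | P i) F i <= \sum_i F i.
Proof. by move=> F_ge0; rewrite [leRHS](bigID P) /= lerDl sumr_ge0. Qed.

Lemma sum_indicator (T : finType) (S : {set T}) :
  \sum_(y : T) (y \in S)%:R = #|S|%:R :> algC.
Proof.
by rewrite -sum1_card natr_sum [RHS]big_mkcond; apply: eq_bigr => y _; case: (y \in S).
Qed.

Lemma sum_perm (T : finType) (g : {perm T}) (F : T -> algC) :
  \sum_(z : T) F (g z) = \sum_(y : T) F y.
Proof. by rewrite [RHS](reindex_inj (@perm_inj _ g)). Qed.

Lemma sum_tperm_mul (T : finType) (x : T) (G : T -> algC) (F : {perm T} -> algC) :
  #|T|%:R * \sum_(f : {perm T}) G (f x) * F f =
  \sum_(g : {perm T}) \sum_(z : T) G (g z) * F (tperm x z * g)%g.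
Proof.
rewrite [RHS]exchange_big /=.
rewrite [RHS](eq_bigr (fun z => \sum_(f : {perm T}) G (f x) * F f)); last first.
  move=> z _; rewrite [RHS](reindex_inj (@mulgI _ (tperm x z))) /=.
  by apply: eq_bigr => f _; rewrite permM tpermL.
by rewrite -sum1_card natr_sum mulr_suml; apply: eq_big => // z _; rewrite mul1r.
Qed.

Lemma card_bits n : #|bits n| = (2 ^ n)%N.
Proof. by rewrite card_ffun card_bool card_ord. Qed.

Lemma card_ord_ltn (r c : nat) : #|[set i : 'I_(r + c) | (i < r)%N]| = r.
Proof.
have -> : [set i : 'I_(r + c) | (i < r)%N] = [set widen_ord (leq_addr c r) j | j in 'I_r].
  apply/setP => i; rewrite inE; apply/idP/imsetP => [ir | [j _ ->]].
    by exists (Ordinal ir) => //; apply/val_inj.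
  by rewrite /= ltn_ord.
by rewrite card_imset ?card_ord // => i j /(congr1 val) /= e; apply/val_inj.
Qed.

Lemma card_bits_supported n (S : {set 'I_n}) :
  #|[set x : bits n | [forall i, (i \notin S) ==> ~~ x i]]| = (2 ^ #|S|)%N.
Proof.
have -> : [set x : bits n | [forall i, (i \notin S) ==> ~~ x i]]
          = [set x in pffun_on false S predT].
  apply/setP => x; rewrite !inE; apply/forallP/pffun_onP => [x_supp | [x_supp _] i].
    split=> [|//]; apply/subsetP => i; rewrite inE; apply: contraTT => iS.
    by have := x_supp i; rewrite iS => /negbTE ->.
  by apply/implyP; apply: contra => xi; apply: (subsetP x_supp); rewrite inE xi.
by rewrite cardsE card_pffun_on card_bool.
Qed.

Lemma card_X1 (r c : nat) : #|X1 r c| = (2 ^ r)%N.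
Proof.
rewrite -[in RHS](card_ord_ltn r c) -card_bits_supported; apply: eq_card => x.
by rewrite !inE; apply: eq_forallb => i; rewrite inE -leqNgt.
Qed.

Lemma card_X2 (r c : nat) : #|X2 r c| = (2 ^ c)%N.
Proof.
have card_ge : #|~: [set i : 'I_(r + c) | (i < r)%N]| = c.
  by have := cardsC [set i : 'I_(r + c) | (i < r)%N]; rewrite card_ord_ltn card_ord => /addnI.
rewrite -[in RHS]card_ge -card_bits_supported; apply: eq_card => x.
by rewrite !inE; apply: eq_forallb => i; rewrite !inE negbK.
Qed.

Section States.
Variables n W : nat.
Local Notation R := (reg n W).

Definition sqnorm (v : state n W) : algC := \sum_(i : R) `|v i| ^+ 2.

Definition query_weight (v : state n W) (a : bits n) : algC :=
  \sum_(i : R | i.1.1 == a) `|v i| ^+ 2.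

Lemma sum_query_weight (v : state n W) : \sum_(a : bits n) query_weight v a = sqnorm v.
Proof.
rewrite /query_weight (exchange_big_dep predT) //=; apply: eq_bigr => i _.
by rewrite (big_pred1 i.1.1) // => a; rewrite eq_sym.
Qed.

Definition xor_answer (g : {perm bits n}) (i : R) : R :=
  (i.1.1, bxor n i.1.2 (g i.1.1), i.2).

Lemma xor_answerK g : involutive (xor_answer g).
Proof. by case=> [[a b] w]; rewrite /xor_answer /= bxorK. Qed.

Lemma xor_answer_inj g : injective (xor_answer g).
Proof. exact: inv_inj (@xor_answerK g). Qed.

Lemma oracleE g v i : applyop n W (oracle n W g) v i = v (xor_answer g i).
Proof.
rewrite /applyop (bigD1 (xor_answer g i)) //= big1 ?addr0.
  by rewrite /oracle /xor_answer /= !eqxx bxorK /= eqxx mul1r.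
case: i => [[a b] w] [[ja jb] jw] /=; rewrite /oracle /xor_answer /=.
move=> ne; case: andP => [[/andP[/eqP ea /eqP eb] /eqP ew]|_]; last by rewrite mul0r.
by move: ne; rewrite eb -ea -ew bxorK eqxx.
Qed.

Lemma sqnorm_oracle g v : sqnorm (applyop n W (oracle n W g) v) = sqnorm v.
Proof.
rewrite /sqnorm (reindex_inj (@xor_answer_inj g)) /=.
by apply: eq_bigr => i _; rewrite oracleE xor_answerK.
Qed.

Lemma sqnorm_unitary (U : op n W) v : unitary n W U -> sqnorm (applyop n W U v) = sqnorm v.
Proof.
move=> hU; rewrite /sqnorm /applyop.
transitivity (\sum_(j : R) \sum_(k : R) v j * (v k)^* * \sum_(i : R) (U i k)^* * U i j).
  under eq_bigr => i _ do rewrite normCK rmorph_sum /= mulr_suml.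
  rewrite exchange_big /=; apply: eq_bigr => j _.
  under eq_bigr => i _ do rewrite mulr_sumr.
  rewrite exchange_big /=; apply: eq_bigr => k _.
  by rewrite mulr_sumr; apply: eq_bigr => i _; rewrite rmorphM /=; ring.
apply: eq_bigr => j _; rewrite normCK (bigD1 j) //= hU eqxx mulr1 big1 ?addr0 // => k nk.
by rewrite hU (negbTE nk) mulr0.
Qed.

Lemma applyopB (U : op n W) a b i :
  applyop n W U a i - applyop n W U b i = applyop n W U (fun j => a j - b j) i.
Proof. by rewrite /applyop -sumrB; apply: eq_bigr => j _; rewrite mulrBr. Qed.

Lemma sqnorm_oracleB_le (g g' : {perm bits n}) v (d1 d2 : bits n) :
  (forall a, g' a != g a -> (a == d1) || (a == d2)) ->
  sqnorm (fun i => applyop n W (oracle n W g') v i - applyop n W (oracle n W g) v i)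
   <= 4%:R * (query_weight v d1 + query_weight v d2).
Proof.
move=> g'g.
pose P (i : R) : algC := (g' i.1.1 != g i.1.1)%:R.
have moved_sum h : \sum_(i : R) P i * `|v (xor_answer h i)| ^+ 2 = \sum_(i : R) P i * `|v i| ^+ 2.
  by rewrite [RHS](reindex_inj (@xor_answer_inj h)).
apply: le_trans (_ : \sum_(i : R) P i * (2%:R * `|v (xor_answer g' i)| ^+ 2
                                     + 2%:R * `|v (xor_answer g i)| ^+ 2) <= _).
  apply: ler_sum => i _; rewrite !oracleE /P.
  case: eqP => [e|_]; first by rewrite /xor_answer e subrr normr0 expr0n /= mul0r.
  by rewrite mul1r -(normrN (v (xor_answer g i))) sqr_normD_le2.
rewrite (eq_bigr (fun i => 2%:R * (P i * `|v (xor_answer g' i)| ^+ 2)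
                         + 2%:R * (P i * `|v (xor_answer g i)| ^+ 2))); last by move=> i _; ring.
rewrite big_split /= -!mulr_sumr !moved_sum -mulrDl -natrD ler_wpM2l ?ler0n //.
rewrite /query_weight !(big_mkcond (fun i : R => i.1.1 == _)) -big_split /=.
apply: ler_sum => i _; rewrite /P.
have [/g'g/orP[]/eqP <-|_] := boolP (g' i.1.1 != g i.1.1).
- by rewrite eqxx mul1r lerDl; case: ifP; rewrite ?exprn_ge0.
- by rewrite eqxx mul1r lerDr; case: ifP; rewrite ?exprn_ge0.
- by rewrite mul0r addr_ge0 //; case: ifP; rewrite ?exprn_ge0.
Qed.

End States.

Section Algorithm.
Variables (r c W T : nat) (U : nat -> op (r + c) W) (s : nat -> bool)
  (out : reg (r + c) W -> bits (r + c) * bits (r + c)).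
Hypothesis U_unitary : forall t, (t <= T)%N -> unitary (r + c) W (U t).
Local Notation n := (r + c).
Local Notation R := (reg n W).
Local Notation A := (X1 r c).
Local Notation B := (X2 r c).
Local Notation psi f t := (run n W U s f t).

Lemma sqnorm_init : sqnorm (init n W) = 1.
Proof.
rewrite /sqnorm (bigD1 (bzero n, bzero n, ord0)) //= big1 ?addr0.
  by rewrite /init eqxx normr1 expr1n.
by move=> i ni; rewrite /init (negbTE ni) normr0 expr0n.
Qed.

Lemma sqnorm_run f t : (t <= T)%N -> sqnorm (psi f t) = 1.
Proof.
elim: t => [|t IHt] ht; rewrite /= (sqnorm_unitary _ (U_unitary ht)).
  exact: sqnorm_init.
by rewrite sqnorm_oracle IHt // ltnW.
Qed.

Definition query_perm (f : {perm bits n}) k := if s k then (f^-1)%g else f.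

Definition query_gap (g g' : {perm bits n}) k : algC :=
  sqnorm (fun i => applyop n W (oracle n W (query_perm g' k)) (psi g k) i
                 - applyop n W (oracle n W (query_perm g k)) (psi g k) i).

(* Hybrid argument: after step t the error is p + q, with p the previous error
   moved by a unitary and q of squared norm query_gap; weighting by t in
   sqr_normD_le keeps the bound quadratic in t. *)
Lemma sqnorm_runB_le g g' t : (t <= T)%N ->
  sqnorm (fun i => psi g' t i - psi g t i) <= t%:R * \sum_(k < t) query_gap g g' k.
Proof.
elim: t => [|t IHt] ht.
  by rewrite mul0r /sqnorm big1 // => i _; rewrite subrr normr0 expr0n.
set p := applyop n W (oracle n W (query_perm g' t)) (fun k => psi g' t k - psi g t k).
set q := fun j => applyop n W (oracle n W (query_perm g' t)) (psi g t) j
                - applyop n W (oracle n W (query_perm g t)) (psi g t) j.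
have -> : sqnorm (fun i => psi g' t.+1 i - psi g t.+1 i) = sqnorm (fun j => p j + q j).
  rewrite -[RHS](sqnorm_unitary _ (U_unitary ht)); apply: eq_bigr => i _ /=.
  rewrite applyopB; congr (`|_| ^+ 2); apply: eq_bigr => j _; congr (_ * _).
  by rewrite /p /q -applyopB /query_perm; ring.
have sqnorm_p : sqnorm p = sqnorm (fun k => psi g' t k - psi g t k) by exact: sqnorm_oracle.
rewrite big_ord_recr /=; have [t0|t_gt0] := posnP t.
  rewrite t0 big_ord0 add0r mul1r; apply: ler_sum => j _.
  rewrite [p j]big1 => [|k _]; last by rewrite t0 subrr mulr0.
  by rewrite add0r /q t0.
rewrite -(ler_pM2l (_ : 0 < t%:R)) ?ltr0n //.
apply: le_trans (_ : t.+1%:R * sqnorm p + (t * t.+1)%N%:R * sqnorm q <= _).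
  by rewrite /sqnorm !mulr_sumr -big_split /=; apply: ler_sum => j _; apply: sqr_normD_le.
rewrite sqnorm_p; apply: le_trans (lerD (ler_wpM2l (ler0n _ _) (IHt (ltnW ht))) (lexx _)) _.
by rewrite natrM le_eqVlt -/(query_gap g g' t); apply/orP; left; apply/eqP; ring.
Qed.

Definition outprob (f : {perm bits n}) (x y : bits n) : algC :=
  \sum_(i : R | out i == (x, y)) `|psi f T i| ^+ 2.

Lemma outprob_ge0 f x y : 0 <= outprob f x y.
Proof. by apply: sumr_ge0 => i _; rewrite exprn_ge0. Qed.

Definition query_point (g : {perm bits n}) (x : bits n) k := if s k then g x else x.

Lemma query_perm_tpermM (g : {perm bits n}) x z k a :
  query_perm (tperm x z * g)%g k a != query_perm g k a ->
  (a == query_point g x k) || (a == query_point g z k).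
Proof.
rewrite /query_perm /query_point; case: (s k); apply: contraR => /norP[ax az].
  rewrite invMg tpermV permM tpermD //.
    by apply: contra ax => /eqP ->; rewrite permKV.
  by apply: contra az => /eqP ->; rewrite permKV.
by rewrite permM tpermD // eq_sym.
Qed.

Lemma outprob_tpermM_le (g : {perm bits n}) (x z : bits n) :
  outprob (tperm x z * g)%g x (g z) <= 2%:R * outprob g x (g z) +
    8%:R * T%:R * \sum_(k < T) (query_weight (psi g k) (query_point g x k)
                               + query_weight (psi g k) (query_point g z k)).
Proof.
set g' := (tperm x z * g)%g.
apply: le_trans (_ : 2%:R * outprob g x (g z)
                     + 2%:R * sqnorm (fun i => psi g' T i - psi g T i) <= _).
  apply: le_trans (_ : \sum_(i : R | out i == (x, g z))
      (2%:R * `|psi g T i| ^+ 2 + 2%:R * `|psi g' T i - psi g T i| ^+ 2) <= _).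
    apply: ler_sum => i _.
    by have := sqr_normD_le2 (psi g T i) (psi g' T i - psi g T i); rewrite addrC subrK.
  rewrite big_split /= -!mulr_sumr lerD2l ler_wpM2l ?ler0n //.
  by apply: ler_psum_sub => i; apply: exprn_ge0.
rewrite lerD2l; apply: le_trans (ler_wpM2l (ler0n _ 2) (sqnorm_runB_le g g' (leqnn T))) _.
rewrite mulrA -[8%:R]/((2 * 4)%N%:R : algC) natrM -!mulrA ler_wpM2l ?ler0n //.
rewrite mulrCA ler_wpM2l ?ler0n // mulr_sumr; apply: ler_sum => k _.
exact/sqnorm_oracleB_le/query_perm_tpermM.
Qed.

Definition npairs (f : {perm bits n}) := #|[set a | (a \in A) && (f a \in B)]|.

Lemma card_Xpairs f : #|Xpairs r c f| = npairs f.
Proof.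
have -> : Xpairs r c f = [set (a, f a) | a in [set a | (a \in A) && (f a \in B)]].
  apply/setP => -[a b]; rewrite inE /=; apply/idP/imsetP.
    case/and3P => ha hb /eqP fab.
    by exists a; [rewrite inE ha fab hb | rewrite fab].
  by case=> a'; rewrite inE => /andP[ha hb] [-> ->]; rewrite ha hb eqxx.
by apply: card_imset => a1 a2 [].
Qed.

Lemma npairsE f : (npairs f)%:R = \sum_(a : bits n) (f a \in B)%:R * (a \in A)%:R :> algC.
Proof. by rewrite -sum_indicator; apply: eq_bigr => a _; rewrite inE -natrM mulnb andbC. Qed.

Lemma npairs_tpermM (g : {perm bits n}) x z : (npairs (tperm x z * g)%g <= npairs g + 2)%N.
Proof.
have sub : [set a | (a \in A) && ((tperm x z * g)%g a \in B)]
           \subset [set a | (a \in A) && (g a \in B)] :|: [set x; z].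
  apply/subsetP => a; rewrite in_setU in_set2 !in_set permM.
  have [->|ax] := eqVneq a x; first by rewrite ?eqxx !orbT.
  have [->|az] := eqVneq a z; first by rewrite ?eqxx !orbT.
  by rewrite tpermD ?orbF // eq_sym.
apply: leq_trans (subset_leq_card sub) _; apply: leq_trans (leq_card_setU _ _) _.
by rewrite leq_add2l cards2; case: (x != z).
Qed.

Lemma successE f : success r c W T U s out f =
  \sum_(a : bits n) ((a \in A) && (f a \in B))%:R * outprob f a (f a).
Proof.
rewrite /success /outprob; under [RHS]eq_bigr do rewrite mulr_sumr.
rewrite (exchange_big_dep predT) //= big_mkcond /=; apply: eq_bigr => i _.
case: (out i) => x y /=; have [<-|fxy] := eqVneq (f x) y.
  rewrite (big_pred1 x) => [|a /=]; last first.
    by rewrite xpair_eqE eq_sym; case: eqP => [->|] //=; rewrite eqxx.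
  by rewrite andbT; case: (_ && _); rewrite ?mul1r ?mul0r.
rewrite big_pred0 => [|a /=]; last first.
  by rewrite xpair_eqE; case: eqP => //= <-; rewrite eq_sym (negbTE fxy).
by rewrite !andbF.
Qed.

Lemma sum_outprob (g : {perm bits n}) : \sum_(x : bits n) \sum_(y : bits n) outprob g x y = 1.
Proof.
rewrite -(sqnorm_run g (leqnn T)) pair_big /= /outprob (exchange_big_dep predT) //=.
by apply: eq_bigr => i _; rewrite (big_pred1 (out i)) // => p; rewrite eq_sym.
Qed.

Lemma sum_outprob_X_le1 (g : {perm bits n}) : \sum_(a : bits n) \sum_(z : bits n)
   (a \in A)%:R * (g z \in B)%:R * outprob g a (g z) <= 1.
Proof.
rewrite -[leRHS](sum_outprob g); apply: ler_sum => a _.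
rewrite (sum_perm g (fun y => (a \in A)%:R * (y \in B)%:R * outprob g a y)).
apply: ler_sum => y _.
by case: (a \in A); case: (y \in B); rewrite /= ?mul1r ?mul0r ?outprob_ge0.
Qed.

Lemma sum_query_point_le1 (g : {perm bits n}) k (P : pred (bits n)) : (k <= T)%N ->
  \sum_(a : bits n) (P a)%:R * query_weight (psi g k) (query_point g a k) <= 1.
Proof.
move=> hk; rewrite -[leRHS](sqnorm_run g hk) -sum_query_weight.
have -> : \sum_(a : bits n) query_weight (psi g k) a
        = \sum_(a : bits n) query_weight (psi g k) (query_point g a k).
  by rewrite /query_point; case: (s k); rewrite ?sum_perm.
apply: ler_sum => a _; case: (P a); rewrite ?mul1r ?mul0r ?lexx //.
by apply: sumr_ge0 => i _; rewrite exprn_ge0.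
Qed.

Lemma sum_query_point_X_le (g : {perm bits n}) k : (k <= T)%N ->
  \sum_(a : bits n) \sum_(z : bits n) (a \in A)%:R * (g z \in B)%:R *
     (query_weight (psi g k) (query_point g a k) + query_weight (psi g k) (query_point g z k))
  <= #|B|%:R + #|A|%:R.
Proof.
move=> hk; set w := query_weight (psi g k).
have sumB : \sum_(z : bits n) (g z \in B)%:R = #|B|%:R :> algC.
  by rewrite (sum_perm g (fun y => (y \in B)%:R)) sum_indicator.
have sum_x : \sum_(a : bits n) \sum_(z : bits n)
               (a \in A)%:R * (g z \in B)%:R * w (query_point g a k)
           = #|B|%:R * \sum_(a : bits n) (a \in A)%:R * w (query_point g a k).
  rewrite mulr_sumr; apply: eq_bigr => a _.
  by rewrite -sumB mulr_suml; apply: eq_bigr => z _; ring.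
have sum_z : \sum_(a : bits n) \sum_(z : bits n)
               (a \in A)%:R * (g z \in B)%:R * w (query_point g z k)
           = #|A|%:R * \sum_(z : bits n) (g z \in B)%:R * w (query_point g z k).
  rewrite exchange_big mulr_sumr; apply: eq_bigr => z _.
  by rewrite -sum_indicator mulr_suml; apply: eq_bigr => a _; ring.
under eq_bigr => a _ do rewrite (eq_bigr _ (fun z _ => mulrDr _ _ _)) big_split.
rewrite big_split /= sum_x sum_z.
by apply: lerD; rewrite ler_piMr ?ler0n ?(sum_query_point_le1 _ _ hk).
Qed.

Definition swap_cost : algC := 2%:R + 8%:R * T%:R * (T%:R * (#|B|%:R + #|A|%:R)).

Definition swap_bound (a : bits n) (g : {perm bits n}) (z : bits n) : algC :=
  (a \in A)%:R * (g z \in B)%:R * (2%:R * outprob g a (g z) +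
    8%:R * T%:R * \sum_(k < T) (query_weight (psi g k) (query_point g a k)
                               + query_weight (psi g k) (query_point g z k))).

Lemma swap_bound_ge0 a g z : 0 <= swap_bound a g z.
Proof.
rewrite /swap_bound !mulr_ge0 ?ler0n ?addr_ge0 ?mulr_ge0 ?ler0n ?outprob_ge0 ?sumr_ge0 // => k _.
by rewrite addr_ge0 // sumr_ge0 // => i _; rewrite exprn_ge0.
Qed.

Lemma sum_swap_bound_le g : \sum_(a : bits n) \sum_(z : bits n) swap_bound a g z <= swap_cost.
Proof.
pose ind a z : algC := (a \in A)%:R * (g z \in B)%:R.
pose w k a := query_weight (psi g k) (query_point g a k).
rewrite (eq_bigr (fun a => 2%:R * \sum_z ind a z * outprob g a (g z)
    + 8%:R * T%:R * \sum_(k < T) \sum_z ind a z * (w k a + w k z))); last first.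
  move=> a _; rewrite [X in _ + _ * X]exchange_big /= !mulr_sumr -big_split /=.
  by apply: eq_bigr => z _; rewrite /swap_bound -mulr_sumr /ind /w; ring.
rewrite big_split /= -!mulr_sumr /swap_cost; apply: lerD.
  by rewrite ler_piMr ?ler0n ?sum_outprob_X_le1.
rewrite ler_wpM2l ?mulr_ge0 ?ler0n // exchange_big /= [T%:R * _]mulr_natl.
rewrite -[X in _ *+ X](card_ord T) -sumr_const; apply: ler_sum => k _.
exact/sum_query_point_X_le/ltnW.
Qed.

Lemma tpermM_term_le a (g : {perm bits n}) z :
  (g z \in B)%:R * ((a \in A)%:R * (npairs (tperm a z * g)%g)%:R
                    * outprob (tperm a z * g)%g a ((tperm a z * g)%g a))
  <= ((npairs g)%:R + 2%:R) * swap_bound a g z.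
Proof.
rewrite permM tpermL.
case aA: (a \in A); case gzB: (g z \in B); rewrite ?mul0r ?mulr0 ?mul1r;
  try by rewrite mulr_ge0 ?addr_ge0 ?ler0n ?swap_bound_ge0.
rewrite /swap_bound aA gzB !mul1r; apply: ler_pM; rewrite ?ler0n ?outprob_ge0 //.
  by rewrite -natrD ler_nat npairs_tpermM.
exact: outprob_tpermM_le.
Qed.

Lemma weighted_success_le :
  #|bits n|%:R * \sum_(f : {perm bits n}) (npairs f)%:R * success r c W T U s out f
  <= \sum_(g : {perm bits n}) ((npairs g)%:R + 2%:R) * swap_cost.
Proof.
pose F a f := (a \in A)%:R * (npairs f)%:R * outprob f a (f a).
have -> : \sum_(f : {perm bits n}) (npairs f)%:R * success r c W T U s out f
          = \sum_(a : bits n) \sum_(f : {perm bits n}) (f a \in B)%:R * F a f.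
  rewrite exchange_big /=; apply: eq_bigr => f _; rewrite successE mulr_sumr.
  by apply: eq_bigr => a _; rewrite /F; case: (a \in A); case: (f a \in B); rewrite /=; ring.
rewrite mulr_sumr.
apply: le_trans (_ : \sum_(a : bits n) \sum_(g : {perm bits n}) \sum_(z : bits n)
                       ((npairs g)%:R + 2%:R) * swap_bound a g z <= _).
  apply: ler_sum => a _; rewrite (sum_tperm_mul a (fun y => (y \in B)%:R) (F a)).
  by apply: ler_sum => g _; apply: ler_sum => z _; apply: tpermM_term_le.
rewrite exchange_big /=; apply: ler_sum => g _.
under eq_bigr => a _ do rewrite -mulr_sumr.
by rewrite -mulr_sumr ler_wpM2l ?addr_ge0 ?ler0n ?sum_swap_bound_le.
Qed.

Lemma sum_npairs : \sum_(f : {perm bits n}) (npairs f)%:R = #|{perm bits n}|%:R :> algC.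
Proof.
have N_neq0 : #|bits n|%:R != 0 :> algC by rewrite pnatr_eq0 card_bits -lt0n expn_gt0.
apply: (mulfI N_neq0).
under eq_bigr => f _ do rewrite npairsE.
rewrite exchange_big mulr_sumr.
under eq_bigr => a _ do rewrite (sum_tperm_mul a (fun y => (y \in B)%:R) (fun=> (a \in A)%:R)).
under eq_bigr => a _ do under eq_bigr => g _ do
  rewrite -mulr_suml (sum_perm g (fun y => (y \in B)%:R)) sum_indicator.
rewrite exchange_big /= sumr_const -mulr_sumr sum_indicator [RHS]mulr_natr.
have -> : #|bits n| = (#|B| * #|A|)%N by rewrite card_bits card_X1 card_X2 -expnD addnC.
by rewrite natrM.
Qed.

Lemma eps_le : eps r c W T U s out <= 3%:R * swap_cost / #|bits n|%:R.
Proof.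
have perm_gt0 : 0 < #|{perm bits n}|%:R :> algC by rewrite ltr0n; apply/card_gt0P; exists 1%g.
have N_gt0 : 0 < #|bits n|%:R :> algC by rewrite card_bits ltr0n expn_gt0.
have -> : eps r c W T U s out = #|{perm bits n}|%:R^-1 *
            \sum_(f : {perm bits n}) (npairs f)%:R * success r c W T U s out f.
  rewrite /eps /DX mulr_sumr; apply: eq_bigr => f _.
  rewrite card_Xpairs natr_sum; under eq_bigr do rewrite card_Xpairs.
  by rewrite sum_npairs mulrCA mulrA mulrC.
rewrite ler_pdivlMr // -mulrA ler_pdivrMl // mulrC.
apply: le_trans weighted_success_le _.
rewrite -mulr_suml big_split /= sum_npairs sumr_const -[2%:R *+ _]mulr_natl.
by rewrite [leLHS](_ : _ = #|{perm bits n}|%:R * (3%:R * swap_cost)) //; ring.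
Qed.

End Algorithm.

Lemma swap_cost_nat_le (T a b m : nat) : (m <= a)%N -> (m <= b)%N ->
  (3 * (2 + 8 * T * (T * (b + a))) * m <= 80 * T.+1 ^ 2 * (a * b))%N.
Proof.
move=> ma mb.
have mb_le : (m * b <= a * b)%N by exact: leq_mul.
have am_le : (a * m <= a * b)%N by exact: leq_mul.
have m_le : (m <= a * b)%N by nia.
nia.
Qed.

(* The bound holds without the hypotheses 1 <= r, 1 <= c and 0 < eps. *)
Theorem theorem4 (r c : nat) (hr : (1 <= r)%N) (hc : (1 <= c)%N)
  (W T : nat) (U : nat -> op (r + c) W) (s : nat -> bool)
  (out : reg (r + c) W -> bits (r + c) * bits (r + c)) :
  (forall t, (t <= T)%N -> unitary (r + c) W (U t)) ->
  0 < eps r c W T U s out ->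
  eps r c W T U s out <= 80%:R * (T.+1 ^ 2)%:R / (2 ^ minn r c)%:R.
Proof.
move=> U_unitary _; apply: le_trans (eps_le s out U_unitary) _.
rewrite /swap_cost card_X1 card_X2 card_bits ler_pdivrMr ?ltr0n ?expn_gt0 //.
rewrite [leRHS]mulrAC ler_pdivlMr ?ltr0n ?expn_gt0 // -!(natrD, natrM) ler_nat.
have -> : (2 ^ (r + c)%R = 2 ^ r * 2 ^ c)%N by rewrite -expnD.
by apply: swap_cost_nat_le; rewrite leq_pexp2l // (geq_minl, geq_minr).
Qed.
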